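(* For $N\ge2$ let $x_{N,k}=k/N$ and $\lambda_{N,k}=\frac{1}{2(N-1)}$ for $k=1,\dots,N-1$, and $x_{N,N}=2$, $\lambda_{N,N}=\frac12$. Let $V_{N,1},\dots,V_{N,N}$ solve the deterministic system $$\frac{d}{dt}V_{N,k}(t)=\sum_{j\neq k}\frac{2(\lambda_{N,k}+\lambda_{N,j})}{V_{N,k}(t)-V_{N,j}(t)},\qquad V_{N,k}(0)=x_{N,k},$$ and let $\alpha_{N,t}=\sum_{k=1}^N\lambda_{N,k}\delta_{V_{N,k}(t)}$. Then for every $T>0$ the sequence $\{\alpha_{N,\cdot}\}_N$ is not tight in $\mathcal M(T)$.
   Context: $\mathcal M(T)=C([0,T],\mathcal P(\mathbb R))$ with the topology of uniform convergence, where $\mathcal P(\mathbb R)$ is the space of probability measures on $\mathbb R$ with the topology of weak convergence (Lévy–Prokhorov metric). A sequence in $\mathcal M(T)$ is tight if it has a subsequence converging in distribution (for deterministic elements: a convergent subsequence). *)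

From HB Require Import structures.
From mathcomp Require Import all_boot all_order all_algebra.
From mathcomp Require Import all_classical all_reals all_analysis.
Set Implicit Arguments. Unset Strict Implicit. Unset Printing Implicit Defensive.
Import Order.TTheory GRing.Theory Num.Theory.
Import numFieldNormedType.Exports.
Local Open Scope classical_set_scope.
Local Open Scope ring_scope.

Definition eps_nbhd (R : realType) (A : set R) (e : R) : set R :=
  [set x | exists2 a, A a & `|x - a| < e].

Definition levy_prokhorov (R : realType) (mu nu : set R -> \bar R) : R :=
  inf [set e : R | 0 < e /\
        forall A : set R, measurable A ->
          (mu A <= nu (eps_nbhd A e) + e%:E)%E /\
          (nu A <= mu (eps_nbhd A e) + e%:E)%E].

Definition lam (R : realType) (N k : nat) : R :=
  if (k < N)%N then (2 * (N%:R - 1))^-1 else 2^-1.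

Definition x0 (R : realType) (N k : nat) : R :=
  if (k < N)%N then k%:R / N%:R else 2.

Definition alpha (R : realType) (V : nat -> nat -> R -> R) (N : nat) (t : R)
  : set R -> \bar R :=
  fun A => (\sum_(1 <= k < N.+1) (lam R N k)%:E * \d_(V N k t) A)%E.

Definition solves_system (R : realType) (T : R) (V : nat -> nat -> R -> R)
  (N : nat) : Prop :=
  (forall k, (1 <= k <= N)%N -> V N k 0 = x0 R N k) /\
  (forall k, (1 <= k <= N)%N -> {within `[0, T], continuous (V N k)}) /\
  (forall j k t, (1 <= j <= N)%N -> (1 <= k <= N)%N -> j != k ->
       0 <= t <= T -> V N j t != V N k t) /\
  (forall k t, (1 <= k <= N)%N -> 0 < t < T ->
     is_derive t 1 (V N k)
       (\sum_(1 <= j < N.+1 | j != k)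
          (2 * (lam R N k + lam R N j)) / (V N k t - V N j t))).

(* Continuity of a path of probability measures on [0,T] for the
   Levy--Prokhorov metric, i.e. membership in M(T). *)
Definition LP_continuous_on (R : realType) (T : R)
  (mu : R -> probability R R) : Prop :=
  forall t, 0 <= t <= T -> forall e : R, 0 < e -> exists2 d : R, 0 < d &
    forall s, 0 <= s <= T -> `|s - t| < d ->
      levy_prokhorov (mu s) (mu t) < e.

(* A (deterministic) sequence (indexed by N >= 2) of paths is tight in M(T):
   it has a subsequence converging uniformly on [0,T] in the
   Levy--Prokhorov metric to some element of M(T). *)
Definition tight_MT (R : realType) (T : R)
  (a : nat -> R -> set R -> \bar R) : Prop :=
  exists phi : nat -> nat, (2 <= phi 0)%N /\ (forall n, (phi n < phi n.+1)%N) /\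
  exists mu : R -> probability R R, LP_continuous_on T mu /\
    forall e : R, 0 < e -> exists n0, forall n, (n0 <= n)%N ->
      forall t, 0 <= t <= T -> levy_prokhorov (a (phi n) t) (mu t) < e.

From HB Require Import structures.
From mathcomp Require Import all_boot all_order all_algebra.
From mathcomp Require Import all_classical all_reals all_analysis.
From mathcomp Require Import ring lra.
Set Implicit Arguments. Unset Strict Implicit. Unset Printing Implicit Defensive.
Import Order.TTheory GRing.Theory Num.Theory.
Import numFieldNormedType.Exports.
Local Open Scope classical_set_scope.
Local Open Scope ring_scope.

(* Particles never collide, so V_N stays above the others, and each of them
   pushes it up with strength 2 (lambda_N + lambda_j) / (V_N - V_j) >=
   1 / (V_N - V_j).  The drifts are antisymmetric, so sum_k V_k is conserved and
   the total gap f = N V_N - sum_k x_k satisfies f f' >= N (N - 1)^2 by AM-HM;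
   hence V_N(T/2)^2 >= N T / 4.  Along a subsequence converging to mu,
   alpha_N(T/2), which has an atom of mass 1/2 at V_N(T/2), is eventually
   within Levy-Prokhorov distance 1/8 of mu(T/2), so mu(T/2) gives mass 3/8 to
   the 1/8-ball around V_N(T/2).  These points escape to infinity, so three of
   the balls are disjoint, and mu(T/2) would have mass at least 9/8. *)

Section real_lemmas.
Context {R : realType}.
Implicit Types (f : R -> R) (a b x K : R).

Lemma sum_antisym_eq0 (F : nat -> nat -> R) (m n : nat) :
  (forall k j, F k j = - F j k) -> \sum_(m <= k < n) \sum_(m <= j < n) F k j = 0.
Proof.
move=> FN; set D := \sum_(m <= k < n) _.
suff : D = - D by lra.
rewrite {1}/D exchange_big -sumrN; apply: eq_bigr => j _.
by rewrite -sumrN; apply: eq_bigr => k _; exact: FN.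
Qed.

Lemma sqr_card_le_sum_mul_sum_inv (u : nat -> R) (m n : nat) : (m < n)%N ->
  (forall k, (m <= k < n)%N -> 0 < u k) ->
  ((n - m)%:R) ^+ 2 <= (\sum_(m <= k < n) u k) * (\sum_(m <= k < n) (u k)^-1).
Proof.
move=> mn u_gt0; set U := \sum_(m <= k < n) u k; set c : R := (n - m)%:R.
have U_gt0 : 0 < U.
  rewrite /U (big_ltn mn) ltr_pwDl ?u_gt0 ?leqnn // big_nat sumr_ge0 // => k.
  by case/andP=> mk kn; rewrite ltW // u_gt0 // kn ltnW.
(* the tangent line of [x |-> x^-1] at [U / c] lies below it *)
have tangent x : 0 < x -> 2 * (c / U) - x * (c / U) ^+ 2 <= x^-1.
  move=> x_gt0; rewrite -subr_ge0.
  have -> : x^-1 - (2 * (c / U) - x * (c / U) ^+ 2) = x^-1 * (1 - x * (c / U)) ^+ 2.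
    by field; rewrite !gt_eqF.
  by rewrite mulr_ge0 ?sqr_ge0 // invr_ge0 ltW.
have := ler_sum_nat (fun k mk => tangent (u k) (u_gt0 k mk)).
rewrite sumrB sumr_const_nat -mulr_suml -/U -[_ *+ (n - m)]mulr_natr -/c.
have -> : 2 * (c / U) * c - U * (c / U) ^+ 2 = c ^+ 2 / U by field; rewrite gt_eqF.
by rewrite -ler_pdivrMl // mulrC.
Qed.

Lemma is_derive_sum_nat (F : nat -> R -> R) (dF : nat -> R) x (m n : nat) :
  (forall k, (m <= k < n)%N -> is_derive x 1 (F k) (dF k)) ->
  is_derive x 1 (\sum_(m <= k < n) F k) (\sum_(m <= k < n) dF k).
Proof.
rewrite !big_nat => dFk; elim/big_rec2: _ => [|k df f /dFk ? ?].
  exact: is_derive_cst.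
exact: is_deriveD.
Qed.

Lemma continuous_sum_nat (A : set R) (F : nat -> R -> R) (m n : nat) :
  (forall k, (m <= k < n)%N -> {within A, continuous (F k)}) ->
  {within A, continuous (\sum_(m <= k < n) F k)}.
Proof.
rewrite big_nat => Fk; elim/big_rec: _ => [|k f /Fk Fkc fc] x.
  exact: cst_continuous.
exact: continuousD (Fkc x) (fc x).
Qed.

Lemma derive_ge_sub_ge f (df : R -> R) K a b : a <= b ->
  (forall x, x \in `]a, b[ -> is_derive x 1 f (df x)) ->
  (forall x, x \in `]a, b[ -> K <= df x) ->
  {within `[a, b], continuous f} -> K * (b - a) <= f b - f a.
Proof.
rewrite le_eqVlt => /predU1P[<- _ _ _|ab fdf Kdf fc]; first by rewrite !subrr mulr0.
have [c cab ->] := MVT ab fdf fc.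
by apply: ler_wpM2r; [rewrite subr_ge0 ltW | exact: Kdf].
Qed.

Lemma mul_derive_ge_sqr_sub f (df : R -> R) K a b : a <= b ->
  (forall x, x \in `]a, b[ -> is_derive x 1 f (df x)) ->
  (forall x, x \in `]a, b[ -> K <= f x * df x) ->
  {within `[a, b], continuous f} -> 2 * K * (b - a) <= f b ^+ 2 - f a ^+ 2.
Proof.
move=> ab fdf Kdf fc; rewrite !expr2.
apply: (@derive_ge_sub_ge (f * f) (fun x => f x *: df x + f x *: df x)) => //.
- by move=> x /fdf dfx; apply: is_deriveM.
- by move=> x /Kdf; rewrite /GRing.scale /=; lra.
- by move=> x; apply: continuousM (fc x) (fc x).
Qed.

End real_lemmas.

Section weights.
Context {R : realType} {N : nat}.
Hypothesis N2 : (2 <= N)%N.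

Lemma lam_ge0 k : 0 <= lam R N k.
Proof.
have N1 : 1 <= N%:R :> R by rewrite ler1n ltnW.
by rewrite /lam; case: ifP => _; rewrite invr_ge0 //; lra.
Qed.

Lemma lam_le1 k : lam R N k <= 1.
Proof.
have N2r : 2 <= N%:R :> R by rewrite ler_nat.
by rewrite /lam; case: ifP => _; rewrite invf_le1 //; lra.
Qed.

Lemma lam_top : lam R N N = 2^-1.
Proof. by rewrite /lam ltnn. Qed.

Context {V : nat -> nat -> R -> R} {t : R}.

Lemma alpha_ge0 A : (0 <= alpha V N t A)%E.
Proof.
by apply: sume_ge0 => k _; rewrite diracE -EFinM lee_fin mulr_ge0 ?lam_ge0.
Qed.

Lemma alpha_le A : (alpha V N t A <= N%:R%:E)%E.
Proof.
apply: (@le_trans _ _ (\sum_(1 <= k < N.+1) 1%:E)%E).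
  apply: lee_sum => k _; rewrite diracE -EFinM lee_fin.
  by case: (_ \in A); rewrite ?mulr1 ?mulr0 ?lam_le1.
by rewrite sumEFin sumr_const_nat subn1.
Qed.

Lemma alpha_top_ge : ((2^-1 : R)%:E <= alpha V N t [set V N N t])%E.
Proof.
rewrite /alpha big_nat_recr /=; last exact: ltnW.
rewrite diracE mem_set // mule1 lam_top leeDr //.
by apply: sume_ge0 => k _; rewrite diracE -EFinM lee_fin mulr_ge0 ?lam_ge0.
Qed.

End weights.

Lemma eps_nbhd_set1 (R : realType) (c e : R) : eps_nbhd [set c] e = ball c e.
Proof.
rewrite -ball_normE; apply/seteqP; split => y /=; first by case=> _ -> /[1!distrC].
by exists c; rewrite // distrC.
Qed.

Lemma ball_disjoint (R : realType) (c d r s : R) :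
  r + s <= d - c -> ball c r `&` ball d s = set0.
Proof.
rewrite -ball_normE => rs; apply/seteqP; split => // y [/=].
rewrite !ltr_distlC; lra.
Qed.

Lemma levy_prokhorov_lt_ball (R : realType) (mu : set R -> \bar R)
    (P : probability R R) (M c m e : R) :
  (forall A, 0 <= mu A)%E -> (forall A, measurable A -> mu A <= M%:E)%E ->
  (m%:E <= mu [set c])%E -> levy_prokhorov mu P < e ->
  ((m - e)%:E <= P (ball c e))%E.
Proof.
move=> mu_ge0 mu_leM mc; rewrite /levy_prokhorov; set E := [set e | _] => lpe.
have M_ge0 : 0 <= M by rewrite -lee_fin (le_trans (mu_ge0 set0)) ?mu_leM.
have E_M1 : E (M + 1).
  split=> [|A mA]; first lra; split.
    apply: (le_trans (mu_leM _ mA)); apply: le_trans (leeDr _ (measure_ge0 _ _)).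
    by rewrite lee_fin; lra.
  apply: (le_trans (probability_le1 P mA)); apply: le_trans (leeDr _ (mu_ge0 _)).
  by rewrite lee_fin; lra.
have [e' [e'_gt0 /(_ _ (measurable_set1 c)) [+ _]] e'e] := inf_lt (ex_intro _ _ E_M1) lpe.
rewrite eps_nbhd_set1 => /(le_trans mc) me'.
rewrite EFinB leeBlDr //; apply: (le_trans me'); apply: leeD; last by rewrite lee_fin ltW.
apply: le_measure; rewrite ?inE; try exact: measurable_realfun.measurable_ball.
exact: le_ball (ltW e'e).
Qed.

Lemma probability_disjoint3_le1 d (T : measurableType d) (R : realType)
    (P : probability T R) (A B C : set T) :
  measurable A -> measurable B -> measurable C ->
  A `&` B = set0 -> A `&` C = set0 -> B `&` C = set0 ->
  (P A + P B + P C <= 1)%E.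
Proof.
move=> mA mB mC AB AC BC.
have mAB : measurable (A `|` B) by exact: measurableU.
have ABC : (A `|` B) `&` C = set0 by rewrite setIUl AC BC setU0.
by rewrite -measureU // -measureU // probability_le1 //; exact: measurableU.
Qed.

Lemma probability_ball3_le1 (R : realType) (P : probability R R) (r c1 c2 c3 : R) :
  0 < r -> c1 + 2 * r <= c2 -> c2 + 2 * r <= c3 ->
  (P (ball c1 r) + P (ball c2 r) + P (ball c3 r) <= 1)%E.
Proof.
move=> r_gt0 c12 c23.
by apply: probability_disjoint3_le1; try exact: measurable_realfun.measurable_ball;
  apply: ball_disjoint; lra.
Qed.

Lemma levy_prokhorov_alpha_lt_ball (R : realType) (V : nat -> nat -> R -> R)
    (N : nat) (t : R) (P : probability R R) (e : R) : (2 <= N)%N ->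
  levy_prokhorov (alpha V N t) P < e -> ((2^-1 - e)%:E <= P (ball (V N N t) e))%E.
Proof.
move=> N2.
exact: levy_prokhorov_lt_ball (alpha_ge0 N2) (fun A _ => alpha_le N2 A) (alpha_top_ge N2).
Qed.

Section particle_system.
Context {R : realType} {T : R} {V : nat -> nat -> R -> R} {N : nat}.
Hypotheses (N2 : (2 <= N)%N) (V_sol : solves_system T V N).

Local Notation drift k t :=
  (\sum_(1 <= j < N.+1 | j != k) (2 * (lam R N k + lam R N j)) / (V N k t - V N j t)).
Local Notation S0 := (\sum_(1 <= k < N.+1) V N k 0).

Let N_gt0 : (0 < N)%N. Proof. exact: ltnW. Qed.
Let N_index : (1 <= N <= N)%N. Proof. by rewrite leqnn N_gt0. Qed.

Lemma particle_lt_top j t : (1 <= j < N)%N -> 0 <= t <= T -> V N j t < V N N t.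
Proof.
move=> /andP[j1 jN] /andP[t0 tT]; have [V0 [Vc [Vneq _]]] := V_sol.
have jN' : (1 <= j <= N)%N by rewrite j1 ltnW.
rewrite ltNge; apply/negP => Vtop_le.
pose g s := V N N s - V N j s.
have gc : {within `[0, t], continuous g}.
  apply: (@continuous_subspaceW _ _ _ `[0, T]); first by apply: subset_itvl; rewrite bnd_simp.
  by move=> x; apply: continuousB; [exact: Vc N N_index x | exact: Vc j jN' x].
have g0 : 0 < g 0.
  rewrite /g (V0 N N_index) (V0 j jN') /x0 ltnn jN subr_gt0 ltr_pdivrMr ?ltr0n //.
  by rewrite -natrM ltr_nat (leq_trans jN) // leq_pmull.
have [c] : exists2 c, c \in `[0, t] & g c = 0.
  have gt_le0 : g t <= 0 by rewrite subr_le0.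
  by apply: (IVT t0 gc); rewrite ge_min le_max gt_le0 (ltW g0) orbT.
rewrite in_itv /= => /andP[c0 ct] /eqP; rewrite subr_eq0 eq_sym; apply/negP.
by apply: (Vneq j N c jN' N_index); [rewrite ltn_eqF | rewrite c0 (le_trans ct tT)].
Qed.

Lemma sum_drift_eq0 t : \sum_(1 <= k < N.+1) drift k t = 0.
Proof.
pose F k j := 2 * (lam R N k + lam R N j) / (V N k t - V N j t).
rewrite -[RHS](@sum_antisym_eq0 _ F 1 N.+1); last first.
  by move=> k j; rewrite /F addrC -opprB invrN mulrN.
apply: eq_bigr => k _; rewrite big_mkcond; apply: eq_bigr => j _.
(* the diagonal terms of the full double sum vanish because [x / 0 = 0] *)
by case: eqP => [->|//]; rewrite /F subrr invr0 mulr0.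
Qed.

Lemma sum_particles_const t : 0 <= t <= T -> \sum_(1 <= k < N.+1) V N k t = S0.
Proof.
move=> /andP[t0 tT]; have [_ [Vc [_ Vder]]] := V_sol.
have [||c _] := @MVT_segment R (\sum_(1 <= k < N.+1) V N k) (fun=> 0) 0 t t0.
- move=> x; rewrite in_itv /= => /andP[x0 xt]; rewrite -(sum_drift_eq0 x).
  apply: is_derive_sum_nat => k /andP[k1 kN]; apply: Vder; first by rewrite k1 -ltnS.
  by rewrite x0 (lt_le_trans xt tT).
- apply: (@continuous_subspaceW _ _ _ `[0, T]); first by apply: subset_itvl; rewrite bnd_simp.
  by apply: continuous_sum_nat => k /andP[k1 kN]; apply: Vc; rewrite k1 -ltnS.
- by rewrite mul0r !fct_sumE => /eqP; rewrite subr_eq0 => /eqP.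
Qed.

Lemma sum_particles0_ge0 : 0 <= S0.
Proof.
have [V0 _] := V_sol.
rewrite big_nat sumr_ge0 // => k /andP[k1 kN]; rewrite V0; last by rewrite k1 -ltnS.
by rewrite /x0; case: ifP => _; rewrite ?divr_ge0 //; lra.
Qed.

Lemma sum_gaps_top t : 0 <= t <= T ->
  \sum_(1 <= j < N) (V N N t - V N j t) = N%:R * V N N t - S0.
Proof.
move=> tT; rewrite -(sum_particles_const tT) big_nat_recr //= sumrB sumr_const_nat.
by rewrite -[V N N t *+ _]mulr_natl natrB //; lra.
Qed.

Lemma sum_gaps_top_ge0 t : 0 <= t <= T -> 0 <= N%:R * V N N t - S0.
Proof.
move=> tT; rewrite -sum_gaps_top // big_nat sumr_ge0 // => j jN.
by rewrite subr_ge0 ltW ?particle_lt_top.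
Qed.

Lemma sum_inv_gaps_le_drift_top t : 0 <= t <= T ->
  \sum_(1 <= j < N) (V N N t - V N j t)^-1 <= drift N t.
Proof.
move=> tT; rewrite [leRHS]big_mkcond big_nat_recr //= eqxx addr0 !big_nat.
apply: ler_sum => j /andP[j1 jN]; rewrite (ltn_eqF jN) mulrC ler_peMr //.
  by rewrite invr_ge0 subr_ge0 ltW // particle_lt_top ?j1.
by rewrite lam_top mulrDr divff // lerDl mulr_ge0 ?lam_ge0.
Qed.

Lemma sqr_sum_gaps_top_ge t : 0 <= t <= T ->
  2 * N%:R * (N%:R - 1) ^+ 2 * t <= (N%:R * V N N t - S0) ^+ 2.
Proof.
move=> /andP[t0 tT]; have [_ [Vc [_ Vder]]] := V_sol.
pose f s := N%:R * V N N s - S0.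
suff : 2 * (N%:R * (N%:R - 1) ^+ 2) * (t - 0) <= f t ^+ 2 - f 0 ^+ 2.
  by have := sqr_ge0 (f 0); rewrite /f subr0; lra.
apply: (@mul_derive_ge_sqr_sub R f (fun x => N%:R * drift N x)) => //.
- move=> x; rewrite in_itv /= => /andP[x0 xt].
  have -> : f = N%:R \*: V N N - cst S0 by [].
  rewrite -[X in is_derive _ _ _ X]subr0; apply: is_deriveB; apply: is_deriveZ.
  by apply: Vder => //; rewrite x0 (lt_le_trans xt tT).
- move=> x; rewrite in_itv /= => /andP[x0 xt].
  have xT : 0 <= x <= T by rewrite ltW //= ltW // (lt_le_trans xt tT).
  have gap_gt0 j : (1 <= j < N)%N -> 0 < V N N x - V N j x.
    by move=> jN; rewrite subr_gt0 particle_lt_top.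
  have := sqr_card_le_sum_mul_sum_inv N2 gap_gt0.
  rewrite sum_gaps_top // natrB // mulr1n => amhm.
  rewrite [leRHS]mulrCA; apply: ler_wpM2l => //; apply: le_trans amhm _.
  by apply: ler_wpM2l; [exact: sum_gaps_top_ge0 | exact: sum_inv_gaps_le_drift_top].
- apply: (@continuous_subspaceW _ _ _ `[0, T]); first by apply: subset_itvl; rewrite bnd_simp.
  have -> : f = cst N%:R \* V N N - cst S0 by [].
  move=> x; apply: continuousB; last exact: cst_continuous.
  by apply: continuousM; [exact: cst_continuous | exact: Vc N N_index x].
Qed.

Lemma top_particle_ge0 t : 0 <= t <= T -> 0 <= V N N t.
Proof.
move=> tT; have Nr_gt0 : 0 < N%:R :> R by rewrite ltr0n.
rewrite -(pmulr_rge0 _ Nr_gt0); have := sum_gaps_top_ge0 tT.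
have := sum_particles0_ge0; lra.
Qed.

Lemma sqr_top_particle_ge t : 0 <= t <= T -> N%:R * t / 2 <= V N N t ^+ 2.
Proof.
move=> tT; have /andP[t0 _] := tT.
have N2r : 2 <= N%:R :> R by rewrite ler_nat.
have sqrN_gt0 : 0 < N%:R ^+ 2 :> R by rewrite exprn_gt0 //; lra.
have Nt_ge0 : 0 <= N%:R * t by rewrite mulr_ge0 //; lra.
have sqr_N_le : N%:R ^+ 2 <= 4 * (N%:R - 1) ^+ 2 :> R by nra.
have gap_le : (N%:R * V N N t - S0) ^+ 2 <= (N%:R * V N N t) ^+ 2.
  by have := sum_gaps_top_ge0 tT; have := sum_particles0_ge0; nra.
rewrite -(ler_pM2l sqrN_gt0) -exprMn; apply: le_trans gap_le.
by apply: le_trans (sqr_sum_gaps_top_ge tT); nra.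
Qed.

End particle_system.

Lemma top_particle_unbounded (R : realType) (T t : R) (V : nat -> nat -> R -> R) :
  (forall N, (2 <= N)%N -> solves_system T V N) -> 0 < t <= T ->
  forall x, exists N0, forall N, (N0 <= N)%N -> x < V N N t.
Proof.
move=> V_sol /andP[t_gt0 tT] x.
have b_ge0 : 0 <= 2 * x ^+ 2 / t.
  by apply: divr_ge0; [have := sqr_ge0 x; lra | exact: ltW].
exists (maxn 2 (Num.Def.archi_bound (2 * x ^+ 2 / t))) => N.
rewrite geq_max => /andP[N2 bN].
have xN : 2 * x ^+ 2 < N%:R * t.
  by rewrite -ltr_pdivrMr // (lt_le_trans (archi_boundP b_ge0)) // ler_nat.
have tT' : 0 <= t <= T by rewrite ltW.
have := sqr_top_particle_ge N2 (V_sol N N2) tT'.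
have := top_particle_ge0 N2 (V_sol N N2) tT'.
nra.
Qed.

Theorem mainTheorem4 (R : realType) (T : R) (V : nat -> nat -> R -> R) :
  0 < T ->
  (forall N, (2 <= N)%N -> solves_system T V N) ->
  ~ tight_MT T (alpha V).
Proof.
move=> T_gt0 V_sol [phi [phi0_ge2 [phi_incr [mu [_ phi_cvg]]]]].
have phi_ge n : (n + 2 <= phi n)%N.
  by elim: n => // n IH; exact: leq_ltn_trans IH (phi_incr n).
pose t := T / 2; have tT : 0 < t <= T by apply/andP; split; rewrite /t; lra.
pose w n := V (phi n) (phi n) t.
have r_gt0 : 0 < 8^-1 :> R by rewrite invr_gt0.
have [n0 phi_near] := phi_cvg _ r_gt0.
have mass n : (n0 <= n)%N -> ((3 / 8 : R)%:E <= mu t (ball (w n) 8^-1))%E.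
  move=> n0n; have N2 : (2 <= phi n)%N by apply: leq_trans (phi_ge n); rewrite leq_addl.
  apply: le_trans (levy_prokhorov_alpha_lt_ball N2 (phi_near n n0n t _)).
    by rewrite lee_fin; lra.
  by case/andP: tT => /ltW -> ->.
have far x : exists2 n, (n0 <= n)%N & x + 2 * 8^-1 <= w n.
  have [N0 N0_far] := top_particle_unbounded V_sol tT (x + 2 * 8^-1).
  exists (n0 + N0); first exact: leq_addr.
  by apply/ltW/N0_far; apply: leq_trans (phi_ge _); rewrite addnAC leq_addl.
have [n1 n01 w01] := far (w n0); have [n2 n02 w12] := far (w n1).
have := probability_ball3_le1 (mu t) r_gt0 w01 w12.
move/(le_trans (leeD (leeD (mass _ (leqnn n0)) (mass _ n01)) (mass _ n02))).
by rewrite -!EFinD lee_fin; lra.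
Qed.
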